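(* Let $n\ge2$ and $x=(x_1,\dots,x_n)\in\mathbb R^n$ with $x_i\ne0$ for all $i$ and $x_1+\dots+x_n=0$. Then $$\sum_{\substack{\sigma\in S_n\\ \pi_\sigma(x)\text{ allowed}}}G_n(\pi_\sigma(x))=0.$$
   Context: $S_n$ is the symmetric group on $\{1,\dots,n\}$, $\pi_\sigma(x)=(x_{\sigma(1)},\dots,x_{\sigma(n)})$. For $y\in\mathbb R^n$, $D_i(y)=y_1+\dots+y_i$; $y$ is called allowed if $D_i(y)\ne0$ for all $i=1,\dots,n-1$, and then $G_n(y)=\prod_{i=1}^{n-1}D_i(y)^{-1}$. *)

From mathcomp Require Import all_boot all_order all_algebra all_fingroup.
Set Implicit Arguments. Unset Strict Implicit. Unset Printing Implicit Defensive.
Import Order.TTheory GRing.Theory Num.Theory.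
Local Open Scope ring_scope.

(* Vectors in R^n are functions 'I_n -> R; coordinate k (0-based) is the
   paper's coordinate k+1. *)

Definition pi_perm (R : Type) (n : nat) (s : 'S_n) (x : 'I_n -> R) : 'I_n -> R :=
  fun k => x (s k).

Definition Dsum (R : realFieldType) (n : nat) (i : nat) (y : 'I_n -> R) : R :=
  \sum_(j < n | (j < i)%N) y j.

Definition allowed (R : realFieldType) (n : nat) (y : 'I_n -> R) : bool :=
  [forall i : 'I_n, (0 < i)%N ==> (Dsum i y != 0)].

Definition Gn (R : realFieldType) (n : nat) (y : 'I_n -> R) : R :=
  \prod_(1 <= i < n) (Dsum i y)^-1.

From mathcomp Require Import all_boot all_order all_algebra all_fingroup.
From mathcomp Require Import ring.
Set Implicit Arguments. Unset Strict Implicit. Unset Printing Implicit Defensive.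
Import Order.TTheory GRing.Theory Num.Theory.
Local Open Scope ring_scope.

(* Perturb x into y = x + t u, where u sums to 0 on the index set S but on no
   proper nonempty subset of it.  For all but finitely many t no partial sum
   of y over a proper subset of S vanishes; the sum over all orderings is then
   the classical one, (-1)^(|S|-1) sum_j prod_(i <> j) y_i^-1, which is 0 since
   y sums to 0.  As t -> 0 the orderings whose partial sums of x vanish early
   blow up.  Grouping them by the first vanishing partial sum B, each group is
   the allowed sum of B, which is 0 by induction on |S|, times a factor with a
   simple pole at t = 0.  So the generic value 0 is the value at t = 0 of a
   rational function in t, and that value is the allowed sum of S. *)

Lemma proper_ind (T : finType) (P : {set T} -> Prop) :
  (forall A : {set T}, (forall B : {set T}, B \proper A -> P B) -> P A) ->
  forall A, P A.
Proof.
move=> IH A; elim: {A}#|A|.+1 {-2}A (ltnSn #|A|) => // k IHk A ltAk.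
by apply: IH => B /proper_card ltBA; apply: IHk; apply: leq_trans ltBA _.
Qed.

Lemma sum_pointed_subsets (V : nmodType) (T : finType) (F : T -> {set T} -> V)
    (A : {set T}) :
  \sum_(j in A) \sum_(B : {set T} | B \subset A :\ j) F j B =
  \sum_(B : {set T} | B \subset A) \sum_(j in B) F j (B :\ j).
Proof.
rewrite [RHS](eq_bigr (fun B : {set T} => \sum_(j in A | j \in B) F j (B :\ j)));
  last first.
  move=> B sBA; apply: eq_bigl => j; case jB: (j \in B); last by rewrite andbF.
  by rewrite andbT (subsetP sBA).
rewrite (exchange_big_dep (mem A)) /=; last by move=> B j _ /andP[].
apply: eq_bigr => j jA.
rewrite [RHS](reindex_onto (fun B : {set T} => j |: B) (fun B => B :\ j)) /=;
  last by move=> B /and3P[_ _ jB]; rewrite setD1K.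
apply: eq_big => B; last by rewrite subsetD1 => /andP[_ jB]; rewrite setU1K.
rewrite subUset sub1set jA setU11 /= andbT subsetD1.
case jB: (j \in B); last by rewrite /= setU1K ?jB // eqxx.
rewrite /= andbF; apply/esym/negbTE; apply/negP => /andP[_ /eqP eqB].
by move: jB; rewrite -eqB setD11.
Qed.

Lemma setD_proper (T : finType) (A B : {set T}) :
  B \subset A -> B != set0 -> A :\: B \proper A.
Proof.
move=> sBA /set0Pn[b bB]; rewrite properE subsetDl /=; apply/subsetPn.
by exists b; [apply: (subsetP sBA) | rewrite inE bB].
Qed.

Section RationalGerms.
Variable R : numFieldType.
Implicit Types (f g : R -> R) (p q : {poly R}).

(* A substitute for continuity at [0] that works over any numeric field: [f]
   agrees, off finitely many points, with a rational function defined at [0]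
   and taking the value [v] there. *)
Definition rat_germ f v := exists p q (bad : seq R),
  [/\ q.[0] != 0, v = p.[0] / q.[0] &
      forall t, t \notin bad -> q.[t] != 0 -> f t = p.[t] / q.[t]].

Lemma eq_rat_germ f g v : f =1 g -> rat_germ f v -> rat_germ g v.
Proof.
move=> fg [p [q [bad [q0 -> fpq]]]]; exists p, q, bad; split=> // t tb qt.
by rewrite -fg fpq.
Qed.

Lemma rat_germ_cst c : rat_germ (fun=> c) c.
Proof.
exists c%:P, 1, [::]; rewrite !hornerC oner_eq0 divr1; split=> // t _ _.
by rewrite !hornerC divr1.
Qed.

Lemma rat_germD f g a b :
  rat_germ f a -> rat_germ g b -> rat_germ (fun t => f t + g t) (a + b).
Proof.
move=> [p1 [q1 [b1 [q10 -> fpq1]]]] [p2 [q2 [b2 [q20 -> fpq2]]]].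
exists (p1 * q2 + p2 * q1), (q1 * q2), (b1 ++ b2).
rewrite !(hornerD, hornerM) mulf_neq0 //; split=> //; first by field; apply/andP.
move=> t; rewrite mem_cat negb_or => /andP[t1 t2].
rewrite !(hornerD, hornerM) mulf_eq0 negb_or => /andP[q1t q2t].
by rewrite fpq1 // fpq2 //; field; apply/andP.
Qed.

Lemma rat_germM f g a b :
  rat_germ f a -> rat_germ g b -> rat_germ (fun t => f t * g t) (a * b).
Proof.
move=> [p1 [q1 [b1 [q10 -> fpq1]]]] [p2 [q2 [b2 [q20 -> fpq2]]]].
exists (p1 * p2), (q1 * q2), (b1 ++ b2).
rewrite !hornerM mulf_neq0 //; split=> //; first by field; apply/andP.
move=> t; rewrite mem_cat negb_or => /andP[t1 t2].
rewrite !hornerM mulf_eq0 negb_or => /andP[q1t q2t].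
by rewrite fpq1 // fpq2 //; field; apply/andP.
Qed.

Lemma rat_germ_sum (I : Type) (r : seq I) (P : pred I) (F : I -> R -> R)
    (v : I -> R) :
  (forall j, P j -> rat_germ (F j) (v j)) ->
  rat_germ (fun t => \sum_(j <- r | P j) F j t) (\sum_(j <- r | P j) v j).
Proof.
move=> Fv; elim: r => [|j r IH].
  by rewrite big_nil; apply: eq_rat_germ (rat_germ_cst 0) => t; rewrite big_nil.
rewrite big_cons; case: ifP => Pj.
  by apply: eq_rat_germ (rat_germD (Fv j Pj) IH) => t; rewrite big_cons Pj.
by apply: eq_rat_germ IH => t; rewrite big_cons Pj.
Qed.

Lemma rat_germ_inv_affine a b : a != 0 -> rat_germ (fun t => (a + t * b)^-1) a^-1.
Proof.
move=> a0; exists 1, (b%:P * 'X + a%:P), [::].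
rewrite hornerMXaddC !hornerE; split=> // t _ _.
by rewrite hornerMXaddC !hornerE addrC mulrC.
Qed.

(* The numerator of [f] is divisible by ['X], which cancels the pole of
   [(t * k)^-1]. *)
Lemma rat_germ_mul_divX f g k : rat_germ f 0 -> rat_germ g 0 -> k != 0 ->
  rat_germ (fun t => f t / (t * k) * g t) 0.
Proof.
move=> [p [q [bad [q0 v0 fpq]]]] g0 k0.
have [p' Dp] : exists p', p = p' * 'X.
  exists (p %/ 'X); rewrite divpK // -[X in X %| _]subr0 dvdp_XsubCl.
  by move: v0 => /esym/eqP; rewrite /root mulf_eq0 invr_eq0 (negPf q0) orbF.
rewrite -[0](mulr0 (p'.[0] / (q.[0] * k))); apply: rat_germM g0.
exists p', (q * k%:P), (0 :: bad); rewrite !hornerE mulf_neq0 //.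
split=> // t; rewrite in_cons negb_or => /andP[t0 tb].
rewrite !hornerE mulf_eq0 negb_or => /andP[qt _].
by rewrite fpq // Dp !hornerE; field; rewrite qt k0 t0.
Qed.

Lemma poly_eq0_of_roots p : (forall t, root p t) -> p = 0.
Proof.
move=> p_root; pose rs := [seq i%:R | i <- iota 0 (size p)] : seq R.
apply: (@roots_geq_poly_eq0 _ _ rs); last by rewrite size_map size_iota.
  by apply/allP => _ /mapP[i _ ->].
by rewrite map_inj_uniq ?iota_uniq // => i j /eqP; rewrite eqr_nat => /eqP.
Qed.

Lemma rat_germ_eq0 f v (bad : seq R) :
  rat_germ f v -> (forall t, t \notin bad -> f t = 0) -> v = 0.
Proof.
move=> [p [q [bad' [q0 -> fpq]]]] f0.
pose Z := \prod_(b <- bad' ++ bad) ('X - b%:P).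
have Z0 : Z != 0 by apply: monic_neq0; apply: monic_prod_XsubC.
suff /eqP : p * q * Z = 0.
  rewrite !mulf_eq0 (negPf Z0) orbF.
  by case/orP=> /eqP E; [rewrite E horner0 mul0r | rewrite E horner0 eqxx in q0].
apply: poly_eq0_of_roots => t; rewrite /root !hornerM.
have [tZ|] := boolP (t \in bad' ++ bad).
  by move: tZ; rewrite -root_prod_XsubC => /eqP->; rewrite mulr0.
rewrite mem_cat negb_or => /andP[t1 t2].
have [->|qt] := eqVneq q.[t] 0; first by rewrite mulr0 mul0r.
move: (f0 t t2); rewrite fpq // => /eqP; rewrite mulf_eq0 invr_eq0 (negPf qt) orbF.
by move=> /eqP->; rewrite !mul0r.
Qed.

End RationalGerms.

Section ChainSums.
Variables (R : numFieldType) (n : nat) (x : 'I_n -> R).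
Implicit Types (A B : {set 'I_n}) (y : 'I_n -> R).

(* [chain_sum y A c] sums, over the orderings [j_1, ..., j_k] of [A], the
   products of the [(c + y j_1 + ... + y j_i)^-1] for [0 <= i < k]. *)
Fixpoint chain_fuel y k A c : R :=
  if k is k'.+1 then \sum_(j in A) c^-1 * chain_fuel y k' (A :\ j) (c + y j)
  else 1.
Definition chain_sum y A c := chain_fuel y #|A| A c.

(* [cut_sum y A c0 c] is the part of [chain_sum y A c] coming from the
   orderings along which the partial sums [c0 + x j_1 + ... + x j_i] vanish
   for the first time at [i = k]. *)
Fixpoint cut_fuel y k A c0 c : R :=
  if k is k'.+1 then
    \sum_(j in A) c^-1 * (if c0 + x j == 0 then (A :\ j == set0)%:R
                          else cut_fuel y k' (A :\ j) (c0 + x j) (c + y j))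
  else 0.
Definition cut_sum y A c0 c := cut_fuel y #|A| A c0 c.

(* The primed sums omit the first factor [c^-1]; they stay meaningful as
   [c] tends to [0]. *)
Definition chain_sum' y A c := \sum_(j in A) chain_sum y (A :\ j) (c + y j).
Definition cut_sum' y A c := \sum_(j in A) cut_sum y (A :\ j) (x j) (c + y j).

(* The sum of the paper's [G] over the allowed orderings of [A], see
   [allowed_sum_permutations] and [allowed_weight_Gn]. *)
Definition allowed_sum A := cut_sum' x A 0.

Lemma chain_sum_set0 y c : chain_sum y set0 c = 1.
Proof. by rewrite /chain_sum cards0. Qed.

Lemma chain_sumE y A c : A != set0 ->
  chain_sum y A c = \sum_(j in A) c^-1 * chain_sum y (A :\ j) (c + y j).
Proof.
rewrite -cards_eq0 /chain_sum; case cardA: #|A| => [|k] // _.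
apply: eq_bigr => j jA; congr (_ * chain_fuel _ _ _ _).
by move: cardA; rewrite (cardsD1 j) jA => -[].
Qed.

Lemma cut_sumE y A c0 c :
  cut_sum y A c0 c = \sum_(j in A) c^-1 *
    (if c0 + x j == 0 then (A :\ j == set0)%:R
     else cut_sum y (A :\ j) (c0 + x j) (c + y j)).
Proof.
rewrite /cut_sum; case cardA: #|A| => [|k].
  by move/eqP: cardA; rewrite cards_eq0 => /eqP->; rewrite big_set0.
apply: eq_bigr => j jA; case: ifP => // _; congr (_ * cut_fuel _ _ _ _ _).
by move: cardA; rewrite (cardsD1 j) jA => -[].
Qed.

Lemma chain_sum_chain_sum' y A c :
  A != set0 -> chain_sum y A c = c^-1 * chain_sum' y A c.
Proof. by move=> A0; rewrite chain_sumE // mulr_sumr. Qed.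

Lemma cut_sum_eq0 y A c0 c : c0 + \sum_(i in A) x i != 0 -> cut_sum y A c0 c = 0.
Proof.
elim/proper_ind: A c0 c => A IH c0 c xA; rewrite cut_sumE big1 // => j jA.
rewrite (big_setD1 j) //= addrA in xA; case: ifP => [/eqP cj0|_].
  have [Aj0|_] := eqVneq (A :\ j) set0; last by rewrite mulr0.
  by rewrite cj0 add0r Aj0 big_set0 eqxx in xA.
by rewrite IH ?mulr0 ?properD1.
Qed.

Lemma chain_sum_cut y A c0 c : c0 != 0 -> c0 + \sum_(i in A) x i = 0 ->
  chain_sum y A c = \sum_(B : {set 'I_n} | B \subset A)
    cut_sum y B c0 c * chain_sum y (A :\: B) (c + \sum_(i in B) y i).
Proof.
elim/proper_ind: A c0 c => A IH c0 c c00 xA.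
have A0 : A != set0 by apply: contra_neq c00 => A0; rewrite -xA A0 big_set0 addr0.
pose F j B := c^-1 * (if c0 + x j == 0 then (B == set0)%:R
                      else cut_sum y B (c0 + x j) (c + y j)) *
              chain_sum y (A :\ j :\: B) (c + y j + \sum_(i in B) y i).
rewrite (eq_bigr (fun B => \sum_(j in B) F j (B :\ j))) => [|B sBA]; last first.
  rewrite cut_sumE mulr_suml; apply: eq_bigr => j jB.
  by rewrite /F setDDl setD1K // -addrA -big_setD1.
rewrite -sum_pointed_subsets chain_sumE //; apply: eq_bigr => j jA.
rewrite /F; case: (boolP (c0 + x j == 0)) => cj.
  rewrite (bigD1 set0) ?sub0set //= big_set0 addr0 eqxx mulr1 setD0 big1 ?addr0 //.
  by move=> B /andP[_ /negPf->]; rewrite mulr0 mul0r.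
rewrite (IH _ (properD1 jA) (c0 + x j)) //; last by rewrite -addrA -big_setD1.
by rewrite mulr_sumr; apply: eq_bigr => B _; rewrite mulrA.
Qed.

Lemma chain_sum_generic y A c :
  (forall B, B \subset A -> B != set0 -> \sum_(i in B) y i != 0) ->
  c + \sum_(i in A) y i = 0 ->
  chain_sum y A c = (-1) ^+ #|A| / \prod_(i in A) y i.
Proof.
elim/proper_ind: A c => A IH c yB yA.
have [->|A0] := eqVneq A set0.
  by rewrite chain_sum_set0 cards0 big_set0 expr0 divr1.
have y0 j : j \in A -> y j != 0.
  move=> jA; have := yB [set j]; rewrite sub1set jA big_set1; apply=> //.
  by apply/set0Pn; exists j; rewrite set11.
have c0 : c != 0.
  by apply: contraNneq (yB A (subxx A) A0) => c0; move: yA; rewrite c0 add0r => ->.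
have yprodA : \prod_(i in A) y i != 0 by apply/prodf_neq0 => i /y0.
rewrite chain_sumE // (eq_bigr (fun j => (-1) ^+ #|A| / \prod_(i in A) y i *
                                         (y j / - c))) => [|j jA]; last first.
  rewrite IH ?properD1 //; first last.
  - by rewrite -addrA -big_setD1.
  - by move=> B sB; apply: yB; apply: subset_trans sB (subD1set _ _).
  have yprodAj : \prod_(i in A :\ j) y i != 0.
    by apply/prodf_neq0 => i; rewrite in_setD1 => /andP[_ /y0].
  rewrite (big_setD1 j jA) (cardsD1 j A) jA exprD expr1 /=.
  by field; rewrite c0 yprodAj y0.
rewrite -mulr_sumr -mulr_suml.
have -> : \sum_(i in A) y i = - c by apply/eqP; rewrite -addr_eq0 addrC yA.
by rewrite divff ?oppr_eq0 // mulr1.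
Qed.

Lemma chain_sum'_cut y A g : (forall i, x i != 0) -> \sum_(i in A) x i = 0 ->
  chain_sum' y A g = \sum_(B : {set 'I_n} | B \subset A)
    cut_sum' y B g * chain_sum y (A :\: B) (g + \sum_(i in B) y i).
Proof.
move=> x0 xA; rewrite /chain_sum'.
rewrite (eq_bigr (fun j => \sum_(B : {set 'I_n} | B \subset A :\ j)
   cut_sum y B (x j) (g + y j) *
   chain_sum y (A :\ j :\: B) (g + y j + \sum_(i in B) y i))) => [|j jA].
  rewrite sum_pointed_subsets; apply: eq_bigr => B sBA.
  rewrite /cut_sum' mulr_suml; apply: eq_bigr => j jB.
  by rewrite setDDl setD1K // -addrA -big_setD1.
by apply: chain_sum_cut; rewrite -?big_setD1.
Qed.

Lemma cut_sum'_eq0 y B g : \sum_(i in B) x i != 0 -> cut_sum' y B g = 0.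
Proof.
by move=> xB; rewrite /cut_sum' big1 // => j jB; rewrite cut_sum_eq0 -?big_setD1.
Qed.

End ChainSums.

Section Perturbation.
Variables (R : numFieldType) (n : nat) (x : 'I_n -> R).
Hypothesis x_neq0 : forall i, x i != 0.
Implicit Types (A B : {set 'I_n}) (u : 'I_n -> R).

Definition perturb u t : 'I_n -> R := fun i => x i + t * u i.

Lemma sum_perturb u t B :
  \sum_(i in B) perturb u t i = \sum_(i in B) x i + t * \sum_(i in B) u i.
Proof. by rewrite big_split mulr_sumr. Qed.

Lemma rat_germ_cut_sum u A c0 g : c0 != 0 ->
  rat_germ (fun t => cut_sum x (perturb u t) A c0 (c0 + t * g))
           (cut_sum x x A c0 c0).
Proof.
elim/proper_ind: A c0 g => A IH c0 g c00.
pose F j t := (c0 + t * g)^-1 * (if c0 + x j == 0 then (A :\ j == set0)%:R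
  else cut_sum x (perturb u t) (A :\ j) (c0 + x j) (c0 + x j + t * (g + u j))).
apply: (@eq_rat_germ _ (fun t => \sum_(j in A) F j t)) => [t|].
  rewrite cut_sumE; apply: eq_bigr => j _; rewrite /F; case: ifP => // _.
  by congr (_ * cut_sum _ _ _ _ _); rewrite /perturb; ring.
rewrite cut_sumE; apply: rat_germ_sum => j jA.
apply: rat_germM; first exact: rat_germ_inv_affine.
by case: ifPn => [_|cj]; [apply: rat_germ_cst | apply: IH; rewrite ?properD1].
Qed.

Lemma rat_germ_cut_sum' u B g :
  rat_germ (fun t => cut_sum' x (perturb u t) B (t * g)) (allowed_sum x B).
Proof.
pose F j t := cut_sum x (perturb u t) (B :\ j) (x j) (x j + t * (g + u j)).
apply: (@eq_rat_germ _ (fun t => \sum_(j in B) F j t)) => [t|].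
  by apply: eq_bigr => j _; rewrite /F; congr cut_sum; rewrite /perturb; ring.
rewrite /allowed_sum /cut_sum'; under eq_bigr do rewrite add0r.
by apply: rat_germ_sum => j _; apply: rat_germ_cut_sum.
Qed.

End Perturbation.

Section Degeneration.
Variables (R : numFieldType) (n : nat) (x : 'I_n -> R).
Hypothesis x_neq0 : forall i, x i != 0.
Variables (S : {set 'I_n}) (u : 'I_n -> R).
Hypothesis allowed_sum_proper : forall B : {set 'I_n},
  B \proper S -> \sum_(i in B) x i = 0 -> allowed_sum x B = 0.
Hypothesis u_generic : forall B : {set 'I_n},
  B \proper S -> B != set0 -> \sum_(i in B) u i != 0.

(* Splitting the orderings of [A] at the first vanishing partial sum of [x],
   only the term where the cut is at the end survives at [t = 0]: the others
   carry a factor [allowed_sum x B = 0] which cancels the pole [(t * k)^-1]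
   of the next factor. *)
Lemma rat_germ_chain_sum' (A : {set 'I_n}) :
  A \subset S -> \sum_(i in A) x i = 0 ->
  rat_germ (fun t => chain_sum' (perturb x u t) A (t * - \sum_(i in A) u i))
           (allowed_sum x A).
Proof.
elim/proper_ind: A => A IH sAS xA; set k := - \sum_(i in A) u i.
have -> : allowed_sum x A =
    \sum_(B : {set 'I_n} | B \subset A) (B == A)%:R * allowed_sum x A.
  rewrite (bigD1 A) //= eqxx mul1r big1 ?addr0 // => B /andP[_ /negPf->].
  by rewrite mul0r.
apply: (@eq_rat_germ _ (fun t => \sum_(B : {set 'I_n} | B \subset A)
    cut_sum' x (perturb x u t) B (t * k) *
    chain_sum (perturb x u t) (A :\: B) (t * k + \sum_(i in B) perturb x u t i)))
  => [t|]; first by rewrite (chain_sum'_cut _ _ x_neq0 xA).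
apply: rat_germ_sum => B sBA.
have [->|BA] := eqVneq B A.
  rewrite mul1r; apply: eq_rat_germ (rat_germ_cut_sum' x_neq0 u A k) => t.
  by rewrite setDv chain_sum_set0 mulr1.
rewrite mul0r.
have [xB|xB] := eqVneq (\sum_(i in B) x i) 0; last first.
  by apply: eq_rat_germ (rat_germ_cst 0) => t; rewrite cut_sum'_eq0 ?mul0r.
have [->|B0] := eqVneq B set0.
  by apply: eq_rat_germ (rat_germ_cst 0) => t; rewrite /cut_sum' big_set0 mul0r.
set A' := A :\: B.
have pA'A : A' \proper A by apply: setD_proper.
have xA' : \sum_(i in A') x i = 0.
  by move: xA; rewrite (big_setID B) /= (setIidPr sBA) xB add0r.
have A'0 : A' != set0.
  by rewrite /A' setD_eq0; apply: contra BA => sAB; rewrite eqEsubset sBA.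
have kA' : - \sum_(i in A') u i != 0.
  by rewrite oppr_eq0 u_generic // (proper_sub_trans pA'A).
have gB : rat_germ (fun t => cut_sum' x (perturb x u t) B (t * k)) 0.
  rewrite -(allowed_sum_proper _ xB) ?(proper_sub_trans _ sAS) ?properEneq ?BA //.
  exact: rat_germ_cut_sum'.
have gA' := IH A' pA'A (subset_trans (proper_sub pA'A) sAS) xA'.
rewrite (allowed_sum_proper _ xA') ?(proper_sub_trans pA'A) // in gA'.
apply: eq_rat_germ (rat_germ_mul_divX gB gA' kA') => t.
have -> : t * k + \sum_(i in B) perturb x u t i = t * - \sum_(i in A') u i.
  rewrite sum_perturb xB add0r /k (big_setID B u) /= (setIidPr sBA); ring.
by rewrite (chain_sum_chain_sum' _ _ A'0) mulrA.
Qed.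

End Degeneration.

Section Vanishing.
Variables (R : numFieldType) (n : nat).
Implicit Types (B S : {set 'I_n}) (x y u : 'I_n -> R).

Lemma zero_sum_generic_direction S : (1 < #|S|)%N ->
  exists u, \sum_(i in S) u i = 0 /\
            forall B, B \proper S -> B != set0 -> \sum_(i in B) u i != 0.
Proof.
move=> S2; have [j0 j0S] : exists j0, j0 \in S.
  by apply/set0Pn; rewrite -card_gt0 ltnW.
pose u i : R := 1 - (i == j0)%:R * #|S|%:R.
have uB B : \sum_(i in B) u i = #|B|%:R - (j0 \in B)%:R * #|S|%:R.
  rewrite sumrB sumr_const; congr (_ - _); case: (boolP (j0 \in B)) => j0B.
    rewrite (big_setD1 j0) //= eqxx big1 ?addr0 // => i.
    by rewrite in_setD1 => /andP[/negPf-> _]; rewrite mul0r.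
  by rewrite big1 ?mul0r // => i iB; case: eqP iB j0B => [->->|]; rewrite ?mul0r.
exists u; split=> [|B pBS B0]; first by rewrite uB j0S mul1r subrr.
rewrite uB; case: (j0 \in B); last by rewrite mul0r subr0 pnatr_eq0 cards_eq0.
by rewrite mul1r subr_eq0 eqr_nat neq_ltn proper_card.
Qed.

Lemma chain_sum'_generic_eq0 y S : (1 < #|S|)%N ->
  (forall B, B \proper S -> B != set0 -> \sum_(i in B) y i != 0) ->
  \sum_(i in S) y i = 0 -> chain_sum' y S 0 = 0.
Proof.
move=> S2 yB yS.
have y0 j : j \in S -> y j != 0.
  move=> jS; have := yB [set j]; rewrite big_set1; apply.
    by rewrite properEcard sub1set jS cards1.
  by apply/set0Pn; exists j; rewrite set11.
rewrite /chain_sum' (eq_bigr (fun j => (-1) ^+ #|S|.-1 / \prod_(i in S) y i * y j))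
  => [|j jS]; first by rewrite -mulr_sumr yS mulr0.
rewrite chain_sum_generic ?add0r -?big_setD1 //; last first.
  by move=> B sB B0; apply: yB => //; apply: sub_proper_trans sB (properD1 jS).
have yprod : \prod_(i in S :\ j) y i != 0.
  by apply/prodf_neq0 => i; rewrite in_setD1 => /andP[_ /y0].
by rewrite (big_setD1 j jS) (cardsD1 j S) jS add1n /=; field; rewrite yprod y0.
Qed.

Lemma allowed_sum_eq0 x : (forall i, x i != 0) ->
  forall S, \sum_(i in S) x i = 0 -> allowed_sum x S = 0.
Proof.
move=> x0 S; elim/proper_ind: S => S IH xS.
have [S1|S2] := leqP #|S| 1.
  rewrite /allowed_sum /cut_sum' big1 // => j jS; rewrite cut_sumE.
  suff -> : S :\ j = set0 by rewrite big_set0.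
  by apply/eqP; rewrite -cards_eq0 -leqn0 -ltnS; move: S1; rewrite (cardsD1 j S) jS.
have [u [uS u_gen]] := zero_sum_generic_direction S2.
have germ := rat_germ_chain_sum' x0 IH u_gen (subxx S) xS.
pose bad := [seq - (\sum_(i in B) x i) / \sum_(i in B) u i | B : {set 'I_n}].
apply: (rat_germ_eq0 germ (bad := bad)) => t tb.
rewrite uS oppr0 mulr0; apply: chain_sum'_generic_eq0 => // [B pBS B0|]; last first.
  by rewrite sum_perturb xS uS mulr0 addr0.
rewrite sum_perturb; apply: contraNneq tb => xuB.
apply/mapP; exists B; first by rewrite mem_enum.
have -> : \sum_(i in B) x i = - (t * \sum_(i in B) u i).
  by apply/eqP; rewrite -addr_eq0 xuB.
by rewrite opprK mulfK ?u_gen.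
Qed.

End Vanishing.

Lemma big_permutations_cons (V : nmodType) (T : eqType) (r : seq T)
    (F : seq T -> V) : uniq r -> r != [::] ->
  \sum_(w <- permutations r) F w =
  \sum_(j <- r) \sum_(w <- permutations (rem j r)) F (j :: w).
Proof.
move=> r_uniq r0; rewrite (perm_big _ (permutationsE _)); last by case: (r) r0.
by rewrite undup_id // big_allpairs_dep.
Qed.

Lemma perm_rem_enum (T : finType) (A : {set T}) j :
  perm_eq (rem j (enum A)) (enum (A :\ j)).
Proof.
apply: uniq_perm; [exact/rem_uniq/enum_uniq | exact: enum_uniq | move=> i].
by rewrite (mem_rem_uniq _ (enum_uniq _)) inE !mem_enum in_setD1.
Qed.

Lemma sum_perm_permutations (V : nmodType) n (F : seq 'I_n -> V) :
  \sum_(s : 'S_n) F (map s (enum 'I_n)) =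
  \sum_(w <- permutations (enum 'I_n)) F w.
Proof.
rewrite -(big_map (fun s : 'S_n => map s (enum 'I_n)) xpredT F).
apply/perm_big/uniq_perm; last first; [move=> w | exact: permutations_uniq |].
  rewrite mem_permutations; apply/mapP/idP => [[s _ ->]|w_perm].
    apply: uniq_perm; [|exact: enum_uniq|].
      by rewrite map_inj_uniq ?enum_uniq //; apply: perm_inj.
    move=> i; rewrite mem_enum; apply/mapP; exists ((s^-1)%g i).
      exact: mem_enum.
    by rewrite permKV.
  have /tuple_permP[s Es] : perm_eq w (ord_tuple n) by rewrite val_ord_tuple.
  exists s; first exact: mem_index_enum.
  by rewrite Es /=; apply: eq_map => i; rewrite tnth_ord_tuple.
rewrite map_inj_uniq ?index_enum_uniq // => s1 s2 /eq_in_map s12.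
by apply/permP => i; apply: s12; apply: mem_enum.
Qed.

Section Weights.
Variables (R : numFieldType) (n : nat) (x : 'I_n -> R).

Fixpoint cut_weight (c : R) (s : seq R) : R :=
  if s is a :: s' then
    c^-1 * (if c + a == 0 then (s' == [::])%:R else cut_weight (c + a) s')
  else 0.

Definition allowed_weight (s : seq R) : R :=
  if s is a :: s' then cut_weight a s' else 0.

Lemma sum_permutations_nil (A : {set 'I_n}) :
  \sum_(w <- permutations (enum A)) (map x w == [::])%:R = (A == set0)%:R :> R.
Proof.
have [->|A0] := eqVneq A set0; first by rewrite enum_set0 big_seq1.
rewrite big1_seq // => w /andP[_]; rewrite mem_permutations => /perm_size.
by rewrite -cardE; case: w => //= cardA; rewrite -cards_eq0 -cardA in A0.
Qed.

Lemma cut_sum_permutations A c :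
  cut_sum x x A c c = \sum_(w <- permutations (enum A)) cut_weight c (map x w).
Proof.
elim/proper_ind: A c => A IH c.
have [->|A0] := eqVneq A set0.
  by rewrite cut_sumE big_set0 enum_set0 big_seq1.
rewrite big_permutations_cons ?enum_uniq //; last first.
  by apply: contraNneq A0 => eA; rewrite -cards_eq0 cardE eA.
rewrite cut_sumE -big_enum; apply: eq_big_seq => j; rewrite mem_enum => jA /=.
rewrite -mulr_sumr (perm_big _ (perm_permutations (perm_rem_enum A j))).
by case: ifP => _; rewrite ?sum_permutations_nil ?IH ?properD1.
Qed.

Lemma allowed_sum_permutations A :
  allowed_sum x A = \sum_(w <- permutations (enum A)) allowed_weight (map x w).
Proof.
have [->|A0] := eqVneq A set0.
  by rewrite /allowed_sum /cut_sum' big_set0 enum_set0 big_seq1.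
rewrite big_permutations_cons ?enum_uniq //; last first.
  by apply: contraNneq A0 => eA; rewrite -cards_eq0 cardE eA.
rewrite /allowed_sum /cut_sum' -big_enum; apply: eq_bigr => j _ /=.
rewrite add0r cut_sum_permutations.
by rewrite (perm_big _ (perm_permutations (perm_rem_enum A j))).
Qed.

End Weights.

Section PartialSums.
Variable R : realFieldType.

Lemma Dsum0 m (y : 'I_m -> R) : Dsum 0 y = 0.
Proof. by rewrite /Dsum big_pred0. Qed.

Lemma DsumS m (y : 'I_m.+1 -> R) i :
  Dsum i.+1 y = y ord0 + Dsum i (fun k => y (lift ord0 k)).
Proof. by rewrite /Dsum big_mkcond big_ord_recl [in RHS]big_mkcond. Qed.

Lemma cut_weight_Dsum m (y : 'I_m -> R) c :
  (0 < m)%N -> c + \sum_(i < m) y i = 0 ->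
  cut_weight c (map y (enum 'I_m)) =
  (\big[andb/true]_(i < m) (c + Dsum i y != 0))%:R *
  \prod_(i < m) (c + Dsum i y)^-1.
Proof.
elim: m y c => // m IH y c _ yc.
rewrite enum_ordSl /= -map_comp !big_ord_recl Dsum0 addr0.
under eq_bigr => i _ do rewrite (DsumS y i) addrA.
under [X in _ * (_ * X)]eq_bigr => i _ do rewrite (DsumS y i) addrA.
have [->|c0] := eqVneq c 0; first by rewrite invr0 !mul0r.
rewrite big_ord_recl /= in yc; case: m => [|m] in IH y yc *.
  rewrite big_ord0 addr0 in yc.
  by rewrite !big_ord0 yc eqxx enum_ord0 /= mul1r.
case: ifP => [/eqP cy0|cy0].
  by rewrite big_ord_recl Dsum0 addr0 cy0 eqxx enum_ordSl /= mulr0 mul0r.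
by rewrite IH -?addrA // mulrCA.
Qed.

Lemma allowed_weight_Gn n (y : 'I_n -> R) : (1 < n)%N -> \sum_(i < n) y i = 0 ->
  allowed_weight (map y (enum 'I_n)) = (allowed y)%:R * Gn y.
Proof.
case: n y => // -[//|m] y _ y0; rewrite enum_ordSl /= -map_comp.
rewrite cut_weight_Dsum //; last by move: y0; rewrite big_ord_recl.
congr ((nat_of_bool _)%:R * _).
  rewrite /allowed -big_andE [RHS]big_mkcond [RHS]big_ord_recl /=.
  by apply: eq_bigr => i _; rewrite (DsumS y i).
by rewrite /Gn big_add1 big_mkord; apply: eq_bigr => i _; rewrite (DsumS y i).
Qed.

End PartialSums.

Theorem lemmaC4 (R : realFieldType) (n : nat) (x : 'I_n -> R) :
  (2 <= n)%N ->
  (forall i : 'I_n, x i != 0) ->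
  \sum_(i < n) x i = 0 ->
  \sum_(s : 'S_n | allowed (pi_perm s x)) Gn (pi_perm s x) = 0.
Proof.
move=> n2 x0 x_sum.
rewrite big_mkcond (eq_bigr (fun s : 'S_n =>
  allowed_weight (map x (map s (enum 'I_n))))) => [|s _]; last first.
  rewrite -map_comp allowed_weight_Gn //.
    by case: allowed; rewrite ?mul1r ?mul0r.
  by rewrite -[RHS]x_sum [RHS](reindex_inj (@perm_inj _ s)).
rewrite (sum_perm_permutations (fun w => allowed_weight (map x w))).
rewrite -(eq_enum (fun i => in_setT i)).
rewrite -allowed_sum_permutations allowed_sum_eq0 //.
by rewrite -[RHS]x_sum; apply: eq_bigl => i; rewrite in_setT.
Qed.
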